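(* Let $A$ be a finite skew brace with $(A,+)$ abelian such that $\Theta(A)$ has exactly one vertex. Then $A$ is isomorphic to one of: (1) $\mathbb{Z}/4\mathbb{Z}$ with its usual addition and $x\circ y=x+y+2xy$; (2) $\mathbb{Z}/2\mathbb{Z}\times\mathbb{Z}/2\mathbb{Z}$ with componentwise addition and $(x_1,y_1)\circ(x_2,y_2)=(x_1+x_2+y_1y_2,\,y_1+y_2)$; (3) $\mathbb{Z}/2\mathbb{Z}\times\mathbb{Z}/4\mathbb{Z}$ with componentwise addition and $(x_1,y_1)\circ(x_2,y_2)=\big(x_1+x_2+\varepsilon(y_1)y_2,\,y_1+y_2+2y_1y_2\big)$, where $\varepsilon(y_1)=0$ if $y_1\in\{0,1\}$ and $\varepsilon(y_1)=1$ if $y_1\in\{2,3\}$, and $\varepsilon(y_1)y_2$ is computed in $\mathbb{Z}/2\mathbb{Z}$.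
   Context: A skew brace is a triple $(A,+,\circ)$ where $(A,+)$ and $(A,\circ)$ are groups with $a\circ(b+c)=a\circ b-a+a\circ c$. $\lambda_a(b)=-a+a\circ b$; $\theta_{(a,b)}(c)=a+\lambda_b(c)-a$ defines an action of $(A,+)\rtimes_\lambda(A,\circ)$ on $(A,+)$ by automorphisms. $\Theta(A)$ is the graph whose vertices are the $\theta$-orbits of size $>1$, two distinct vertices $L_1,L_2$ adjacent iff $\gcd(|L_1|,|L_2|)\ne1$. *)

From mathcomp Require Import all_boot all_algebra.
Set Implicit Arguments. Unset Strict Implicit. Unset Printing Implicit Defensive.
Import GRing.Theory.
Local Open Scope ring_scope.

(* A skew brace (A,+,o) whose additive group is the (abelian) group of the
   zmodType T; circ is the second operation. *)
Definition is_skew_brace (T : zmodType) (circ : T -> T -> T) : Prop :=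
  [/\ associative circ,
      (exists e : T, left_id e circ /\ right_id e circ /\
         forall a : T, exists b : T, circ a b = e /\ circ b a = e)
    & forall a b c : T, circ a (b + c) = circ a b - a + circ a c].

Definition brace_lambda (T : zmodType) (circ : T -> T -> T) (a b : T) : T :=
  - a + circ a b.

Definition brace_theta (T : zmodType) (circ : T -> T -> T) (a b c : T) : T :=
  a + brace_lambda circ b c - a.

Definition theta_orbit (T : finZmodType) (circ : T -> T -> T) (c : T) : {set T} :=
  [set brace_theta circ a b c | a : T, b : T].

Definition Theta_vertices (T : finZmodType) (circ : T -> T -> T) : {set {set T}} :=
  [set theta_orbit circ c | c : T & 1 < #|theta_orbit circ c|]%N.

Definition brace_iso (T U : zmodType) (circ : T -> T -> T) (circU : U -> U -> U)
  (f : T -> U) : Prop :=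
  [/\ bijective f, forall x y, f (x + y) = f x + f y
    & forall x y, f (circ x y) = circU (f x) (f y)].

Definition circ1 (x y : 'Z_4) : 'Z_4 := x + y + 2 * x * y.

Definition circ2 (p q : 'Z_2 * 'Z_2) : 'Z_2 * 'Z_2 :=
  (p.1 + q.1 + p.2 * q.2, p.2 + q.2).

Definition eps_mul (y1 y2 : 'Z_4) : 'Z_2 :=
  if (val y1 < 2)%N then 0 else (val y2)%:R.

Definition circ3 (p q : 'Z_2 * 'Z_4) : 'Z_2 * 'Z_4 :=
  (p.1 + q.1 + eps_mul p.2 q.2, p.2 + q.2 + 2 * p.2 * q.2).

From mathcomp Require Import all_boot all_algebra.
Set Implicit Arguments. Unset Strict Implicit. Unset Printing Implicit Defensive.
Import GRing.Theory.
Local Open Scope ring_scope.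

(* Since (A, +) is abelian, theta-orbits are just orbits of the action
   lambda of (A, o) on (A, +) by automorphisms, so the hypothesis says that
   lambda has exactly one nontrivial orbit O = orbit x; its complement is the
   subgroup Fix of lambda-fixed points.  By orbit-stabilizer #|O| divides
   #|A|, hence #|Fix|; as the translate x + Fix lies in O, we get O = x + Fix.
   Writing delta a := lambda_a(x) - x, each lambda_a translates O by delta a,
   so that a o b = a + b + [b \notin Fix] delta a, and delta is a morphism
   from (A, o) onto Fix.  It follows that Fix has exponent 2 and that delta
   maps Fix into {0, delta (delta x)}.  If delta vanishes on Fix, then
   Fix = {0, delta x} and A is the brace (2) or (1) according to x + x = 0 or
   x + x = delta x.  Otherwise we may choose x with delta x = x + x, and A is
   the brace (3), with Z/2 generated by delta (x + x) and Z/4 by x. *)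

Lemma mulrn_modn (V : zmodType) (v : V) n m : v *+ n = 0 -> v *+ (m %% n) = v *+ m.
Proof. by move=> vn0; rewrite {2}(divn_eq m n) mulrnDr mulnC mulrnA vn0 mul0rn add0r. Qed.

Lemma natmul_ZpD (V : zmodType) (v : V) n (i j : 'Z_n) :
  (1 < n)%N -> v *+ n = 0 -> v *+ val (i + j) = v *+ val i + v *+ val j.
Proof. by move=> n_gt1 vn0; rewrite [val _]/= mulrn_modn ?Zp_cast // mulrnDr. Qed.

Lemma additive_inj (U V : zmodType) (g : U -> V) :
  {morph g : p q / p + q} -> (forall p, g p = 0 -> p = 0) -> injective g.
Proof.
move=> gD g_ker p q gpq; apply/eqP; rewrite -subr_eq0; apply/eqP/g_ker.
by apply: (@addIr _ (g q)); rewrite -gD subrK add0r.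
Qed.

Lemma brace_iso_inv (T U : zmodType) (circ : T -> T -> T) (circU : U -> U -> U)
    (g : U -> T) :
  injective g -> (forall t, exists u, g u = t) ->
  {morph g : p q / p + q} -> {morph g : p q / circU p q >-> circ p q} ->
  exists f, brace_iso circ circU f.
Proof.
move=> g_inj g_surj gD gM.
have g_pre t : exists u, g u == t by have [u <-] := g_surj t; exists u.
pose f t := xchoose (g_pre t).
have fK : cancel f g by move=> t; apply/eqP/(xchooseP (g_pre t)).
have gK : cancel g f by move=> u; apply: g_inj; rewrite fK.
exists f; split=> [|a b|a b]; first by exists g.
  by rewrite -{1}(fK a) -{1}(fK b) -gD gK.
by rewrite -{1}(fK a) -{1}(fK b) -gM gK.
Qed.

Section SkewBrace.
Variables (T : zmodType) (circ : T -> T -> T).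
Hypothesis brace : is_skew_brace circ.
Local Notation lam := (brace_lambda circ).

Lemma circ_addr a b c : circ a (b + c) = circ a b - a + circ a c.
Proof. by case: brace. Qed.

Lemma circA : associative circ.
Proof. by case: brace. Qed.

Lemma circ_a0 a : circ a 0 = a.
Proof.
have := circ_addr a 0 0; rewrite addr0 addrAC => /eqP.
by rewrite eq_sym subr_eq (inj_eq (addrI _)) => /eqP.
Qed.

Lemma circ_0a a : circ 0 a = a.
Proof.
case: brace => _ [e [e_left _]] _.
have e0 : e = 0 by rewrite -[LHS]circ_a0 e_left.
by rewrite -e0 e_left.
Qed.

Lemma circ_inverse a : exists b, circ a b = 0 /\ circ b a = 0.
Proof.
case: brace => _ [e [e_left [_ e_inv]]] _.
have e0 : e = 0 by rewrite -[LHS]circ_a0 e_left.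
by rewrite -e0.
Qed.

Lemma circ_inj a : injective (circ a).
Proof.
move=> u v eq_uv; have [b [_ ba0]] := circ_inverse a.
by rewrite -[u]circ_0a -[v]circ_0a -ba0 -!circA eq_uv.
Qed.

Lemma circ_lam a b : circ a b = a + lam a b.
Proof. by rewrite /brace_lambda addrA subrr add0r. Qed.

Lemma lamD a u v : lam a (u + v) = lam a u + lam a v.
Proof. by rewrite /brace_lambda circ_addr -!addrA. Qed.

Lemma lam0 a : lam a 0 = 0.
Proof. by rewrite /brace_lambda circ_a0 addNr. Qed.

Lemma lamN a u : lam a (- u) = - lam a u.
Proof. by apply/esym/addr0_eq; rewrite -lamD subrr lam0. Qed.

Lemma lamMn a u n : lam a (u *+ n) = lam a u *+ n.
Proof. by elim: n => [|n IHn]; rewrite ?mulr0n ?lam0 // !mulrS lamD IHn. Qed.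

Lemma lam_unit u : lam 0 u = u.
Proof. by rewrite /brace_lambda circ_0a oppr0 add0r. Qed.

Lemma lam_circ a b u : lam (circ a b) u = lam a (lam b u).
Proof.
have circN : circ a (- b) = a + a - circ a b.
  have := circ_addr a b (- b); rewrite subrr circ_a0 => a_eq.
  by apply/eqP; rewrite eq_sym subr_eq {1}a_eq addrAC subrK addrC.
rewrite /brace_lambda circ_addr circN circA !addrA addNr add0r.
by congr (_ + _); rewrite addrAC subrr add0r.
Qed.

End SkewBrace.

Section Orbits.
Variables (T : finZmodType) (circ : T -> T -> T).
Hypothesis brace : is_skew_brace circ.
Local Notation lam := (brace_lambda circ).

Definition lam_fixed (c : T) : bool := [forall b, lam b c == c].

Definition lam_orbit (c : T) : {set T} := [set lam b c | b : T].

Lemma lam_fixedP c : reflect (forall b, lam b c = c) (lam_fixed c).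
Proof. by apply: (iffP forallP) => fix_c b; apply/eqP. Qed.

Lemma fixed0 : lam_fixed 0.
Proof. by apply/lam_fixedP => b; rewrite lam0. Qed.

Lemma fixedD u v : lam_fixed u -> lam_fixed v -> lam_fixed (u + v).
Proof.
move=> /lam_fixedP fix_u /lam_fixedP fix_v.
by apply/lam_fixedP => b; rewrite lamD // fix_u fix_v.
Qed.

Lemma fixedN u : lam_fixed (- u) = lam_fixed u.
Proof.
suff fixN v : lam_fixed v -> lam_fixed (- v) by apply/idP/idP => /fixN; rewrite ?opprK.
by move=> /lam_fixedP fix_v; apply/lam_fixedP => b; rewrite lamN // fix_v.
Qed.

Lemma fixedMn u n : lam_fixed u -> lam_fixed (u *+ n).
Proof. by move=> /lam_fixedP fix_u; apply/lam_fixedP => b; rewrite lamMn // fix_u. Qed.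

Lemma fixedDl u v : lam_fixed v -> lam_fixed (u + v) = lam_fixed u.
Proof.
move=> fix_v; apply/idP/idP => [fix_uv|fix_u]; last exact: fixedD.
by rewrite -(addrK v u); apply: fixedD; rewrite ?fixedN.
Qed.

(* Since (T, +) is abelian, theta-orbits are just lambda-orbits. *)
Lemma theta_orbitE c : theta_orbit circ c = lam_orbit c.
Proof.
apply/setP => y; apply/imset2P/imsetP => [[a b _ _ ->]|[b _ ->]].
  by exists b => //; rewrite /brace_theta addrC addKr.
by exists 0 b => //; rewrite /brace_theta add0r subr0.
Qed.

Lemma orbit_self c : c \in lam_orbit c.
Proof. by apply/imsetP; exists 0; rewrite ?lam_unit. Qed.

Lemma orbit_lam b c : lam b c \in lam_orbit c.
Proof. by apply/imsetP; exists b. Qed.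

Lemma orbit_eq y c : y \in lam_orbit c -> lam_orbit y = lam_orbit c.
Proof.
case/imsetP => b _ ->; apply/setP => z.
apply/imsetP/imsetP => [[a _ ->]|[a _ ->]]; first by exists (circ a b); rewrite ?lam_circ.
have [b' [_ b'b]] := circ_inverse brace b.
by exists (circ a b') => //; rewrite -lam_circ // -circA // b'b circ_a0.
Qed.

Lemma card_orbit_gt1 c : (1 < #|lam_orbit c|)%N = ~~ lam_fixed c.
Proof.
apply/idP/forallPn => [orbit_gt1|[b moved]].
  apply/forallPn; apply: contraTT orbit_gt1 => /negPn/lam_fixedP fix_c.
  rewrite -leqNgt -(cards1 c) subset_leq_card //.
  by apply/subsetP => y /imsetP [b _ ->]; rewrite fix_c set11.
have sub2 : [set c; lam b c] \subset lam_orbit c.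
  by apply/subsetP => y; rewrite !inE => /orP [] /eqP ->; rewrite ?orbit_self ?orbit_lam.
by apply: leq_trans (subset_leq_card sub2); rewrite cards2 eq_sym moved.
Qed.

End Orbits.

Section SingleOrbit.
Variables (T : finZmodType) (circ : T -> T -> T).
Hypothesis brace : is_skew_brace circ.
Local Notation lam := (brace_lambda circ).
Local Notation fixed := (lam_fixed circ).
Local Notation orbit := (lam_orbit circ).

Variable x : T.
Hypothesis x_moved : ~~ fixed x.
Hypothesis one_orbit : forall c, ~~ fixed c -> c \in orbit x.

Lemma in_orbitE c : (c \in orbit x) = ~~ fixed c.
Proof.
apply/idP/idP => [c_in|]; last exact: one_orbit.
by rewrite -card_orbit_gt1 // (orbit_eq brace c_in) card_orbit_gt1.
Qed.

Lemma card_fiber y : y \in orbit x ->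
  #|[set b | lam b x == y]| = #|[set b | lam b x == x]|.
Proof.
case/imsetP => c _ ->; rewrite -[X in _ = X](card_imset _ (circ_inj brace (a := c))).
apply: eq_card => b; rewrite inE; apply/eqP/imsetP => [lam_b|[a]].
  have [c' [cc' c'c]] := circ_inverse brace c.
  exists (circ c' b); last by rewrite circA // cc' circ_0a.
  by rewrite inE lam_circ // lam_b -lam_circ // c'c lam_unit.
by rewrite inE => /eqP lam_a ->; rewrite lam_circ // lam_a.
Qed.

Lemma card_orbit_dvd : (#|orbit x| %| #|T|)%N.
Proof.
have -> : #|T| = (#|orbit x| * #|[set b | lam b x == x]|)%N.
  rewrite -[#|T|]sum1_card (partition_big (lam^~ x) (mem (orbit x))) => [|b _];
    last exact: orbit_lam.
  rewrite -sum_nat_const; apply: eq_bigr => y y_in.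
  by rewrite sum1dep_card -(card_fiber y_in); apply: eq_card => b; rewrite !inE.
exact: dvdn_mulr.
Qed.

(* Key structural fact: the moved points form the single coset x + Fix, where
   Fix is the subgroup of fixed points.  Indeed #|orbit x| divides
   #|Fix| = #|T| - #|orbit x|, and the translate x + Fix, of size #|Fix|,
   lies inside orbit x. *)
Lemma moved_subx y : ~~ fixed y -> fixed (y - x).
Proof.
move=> y_moved; set F := ~: orbit x.
have F_fixed f : (f \in F) = fixed f by rewrite inE in_orbitE negbK.
have dvd_F : (#|orbit x| %| #|F|)%N.
  by rewrite -(dvdn_addr _ (dvdnn #|orbit x|)) cardsC card_orbit_dvd.
have le_F : (#|orbit x| <= #|F|)%N.
  by rewrite dvdn_leq //; apply/card_gt0P; exists 0; rewrite F_fixed fixed0.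
have xF_sub : [set x + f | f in F] \subset orbit x.
  by apply/subsetP => z /imsetP [f]; rewrite F_fixed => fix_f ->; rewrite in_orbitE fixedDl.
have /eqP xF_eq : [set x + f | f in F] == orbit x.
  by rewrite eqEcard xF_sub (card_imset _ (addrI x)).
have : y \in orbit x by rewrite in_orbitE.
by rewrite -xF_eq => /imsetP [f]; rewrite F_fixed => fix_f ->; rewrite addrC addKr.
Qed.

Lemma moved_subr u v : ~~ fixed u -> ~~ fixed v -> fixed (u - v).
Proof.
move=> /moved_subx fix_u /moved_subx fix_v.
have -> : u - v = (u - x) - (v - x) by rewrite opprB addrA subrK.
by apply: fixedD; rewrite ?fixedN.
Qed.

Lemma moved_addr u v : ~~ fixed u -> fixed (u + v) = ~~ fixed v.
Proof.
move=> u_moved; have [fix_v|v_moved] /= := boolP (fixed v).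
  by rewrite fixedDl // (negbTE u_moved).
by rewrite -[v]opprK moved_subr // fixedN.
Qed.

Lemma fixed_xx : fixed (x + x).
Proof. by rewrite moved_addr. Qed.

Lemma fixed_moved_Mn u n : ~~ fixed u -> fixed (u *+ n) = ~~ odd n.
Proof.
move=> u_moved; elim: n => [|n IHn]; first by rewrite mulr0n fixed0.
by rewrite mulrS moved_addr // IHn /= negbK.
Qed.

Lemma one_orbit_moved z : ~~ fixed z -> forall c, ~~ fixed c -> c \in orbit z.
Proof.
by move=> z_moved c c_moved; rewrite (orbit_eq brace (one_orbit z_moved)) one_orbit.
Qed.

Definition delta (a : T) : T := lam a x - x.

Lemma delta_fixed a : fixed (delta a).
Proof. by apply: moved_subx; rewrite -in_orbitE orbit_lam. Qed.

Lemma lam_moved a y : ~~ fixed y -> lam a y = y + delta a.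
Proof.
move=> /moved_subx /lam_fixedP fix_yx.
by rewrite -{1}(subrK x y) lamD // fix_yx addrAC -addrA.
Qed.

Lemma circ_delta a b : circ a b = a + b + (if fixed b then 0 else delta a).
Proof.
rewrite circ_lam //; case: ifPn => [/lam_fixedP -> | /(lam_moved a) ->].
  by rewrite addr0.
by rewrite addrA.
Qed.

Lemma deltaM a b : delta (circ a b) = delta a + delta b.
Proof.
rewrite {1}/delta lam_circ // (lam_moved b x_moved) lamD //.
by rewrite (elimT (lam_fixedP _ _) (delta_fixed b)) addrAC.
Qed.

(* delta hits every fixed point, as orbit x = x + Fix. *)
Lemma delta_surj f : fixed f -> exists a, delta a = f.
Proof.
move=> fix_f; have : x + f \in orbit x by rewrite in_orbitE fixedDl.
by case/imsetP => b _ lam_b; exists b; rewrite /delta -lam_b addrC addKr.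
Qed.

Lemma delta0 : delta 0 = 0.
Proof. by rewrite /delta lam_unit // subrr. Qed.

Lemma deltaD u f : fixed f -> delta (u + f) = delta u + delta f.
Proof. by move=> fix_f; rewrite -deltaM circ_delta fix_f addr0. Qed.

Lemma deltaMn f n : fixed f -> delta (f *+ n) = delta f *+ n.
Proof.
move=> fix_f; elim: n => [|n IHn]; first by rewrite !mulr0n delta0.
by rewrite !mulrSr deltaD // IHn.
Qed.

Lemma delta_moved u : ~~ fixed u -> delta u = delta x + delta (u - x).
Proof. by move=> u_moved; rewrite -deltaD ?moved_subx // addrC subrK. Qed.

(* Fix has exponent 2: lambda_a fixes x + x, so delta a + delta a = 0. *)
Lemma fixed_double f : fixed f -> f + f = 0.
Proof.
move=> /delta_surj [a <-].
have /lam_fixedP/(_ a) := fixed_xx.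
rewrite lamD // (lam_moved a x_moved) addrACA.
by move/(canRL (addKr (x + x))); rewrite addNr.
Qed.

Lemma moved_double z : ~~ fixed z -> z + z = x + x.
Proof.
move=> /moved_subx/fixed_double; rewrite addrACA -opprD => /eqP.
by rewrite subr_eq0 => /eqP.
Qed.

(* delta kills its own values: compare the two sides of
   delta (f o x) = delta f + delta x, using f o x = x + (f + delta f). *)
Lemma delta_delta f : fixed f -> delta (delta f) = 0.
Proof.
move=> fix_f; have := deltaM f x; rewrite circ_delta (negbTE x_moved) /=.
rewrite -addrA addrC (deltaD _ fix_f) (deltaD _ (delta_fixed f)) addrAC [delta f + _]addrC.
by move/eqP; rewrite -[X in _ == X]addr0 (inj_eq (addrI _)) => /eqP.
Qed.

(* Writing f = delta a with a fixed or a = x + (a - x) shows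
   delta f \in {0, delta (delta x)}. *)
Lemma delta_fixed_values f : fixed f -> delta f = 0 \/ delta f = delta (delta x).
Proof.
move=> /delta_surj [a <-]; have [fix_a|a_moved] := boolP (fixed a).
  by left; apply: delta_delta.
have fix_ax := moved_subx a_moved.
by right; rewrite (delta_moved a_moved) (deltaD _ (delta_fixed _)) (delta_delta fix_ax) addr0.
Qed.

(* From delta (x o x) = 0 and x o x = x + x + delta x. *)
Lemma delta_double : delta (x + x) = delta (delta x).
Proof.
have := deltaM x x; rewrite circ_delta (negbTE x_moved) deltaD ?delta_fixed //.
rewrite (fixed_double (delta_fixed x)) => /(canRL (addrK _)).
by rewrite add0r => ->; apply/eqP; rewrite eq_sym -addr_eq0 fixed_double ?delta_fixed.
Qed.

Lemma delta_nonzero : exists a, delta a != 0.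
Proof.
have /forallPn [a moved_by_a] := x_moved.
by exists a; rewrite /delta subr_eq0.
Qed.

Lemma delta_rebase z a : ~~ fixed z -> lam a z - z = delta a.
Proof. by move=> z_moved; rewrite lam_moved // addrC addKr. Qed.

(* If delta is not trivial on Fix, some moved point z has delta z = z + z:
   take any preimage z of x + x under delta. *)
Lemma good_base_point : delta (delta x) != 0 ->
  exists2 z, ~~ fixed z & delta z = z + z.
Proof.
move=> delta2_neq0; have [z delta_z] := delta_surj fixed_xx.
have z_moved : ~~ fixed z.
  by apply: contra delta2_neq0 => fix_z; rewrite -delta_double -delta_z delta_delta.
by exists z; rewrite // delta_z moved_double.
Qed.

Lemma fixed_coord f u i j : fixed f -> ~~ fixed u -> fixed (f *+ i + u *+ j) = ~~ odd j.
Proof.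
move=> fix_f u_moved.
by rewrite addrC (fixedDl brace _ (fixedMn brace i fix_f)) fixed_moved_Mn.
Qed.

Section DeltaTrivialOnFix.
(* First case: delta vanishes on Fix; then T has order 4. *)
Hypothesis delta2_0 : delta (delta x) = 0.

Lemma deltaA u : delta u = if fixed u then 0 else delta x.
Proof.
have delta_fix f : fixed f -> delta f = 0.
  by move=> fix_f; case: (delta_fixed_values fix_f) => ->.
case: ifPn => [|u_moved]; first exact: delta_fix.
by rewrite (delta_moved u_moved) (delta_fix _ (moved_subx u_moved)) addr0.
Qed.

Lemma delta_x_neq0 : delta x != 0.
Proof.
have [a] := delta_nonzero; rewrite deltaA.
by case: ifP; rewrite ?eqxx.
Qed.

Lemma fixedA f : fixed f -> f = 0 \/ f = delta x.
Proof. by move=> /delta_surj [a <-]; rewrite deltaA; case: ifP; [left|right]. Qed.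

Lemma elementsA t : [\/ t = 0, t = delta x, t = x | t = x + delta x].
Proof.
have [fix_t|t_moved] := boolP (fixed t).
  by case: (fixedA fix_t) => ->; [constructor 1|constructor 2].
case: (fixedA (moved_subx t_moved)) => /(canRL (subrK x)) ->.
  by constructor 3; rewrite add0r.
by constructor 4; rewrite addrC.
Qed.

Lemma iso_Z2Z2 : x + x = 0 -> exists f : T -> 'Z_2 * 'Z_2, brace_iso circ circ2 f.
Proof.
move=> xx0; have dx2 := fixed_double (delta_fixed x).
pose g (p : 'Z_2 * 'Z_2) := delta x *+ val p.1 + x *+ val p.2.
have gD : {morph g : p q / p + q}.
  by move=> p q; rewrite /g !natmul_ZpD ?mulr2n // addrACA.
have g_fixed p : fixed (g p) = ~~ odd (val p.2) by rewrite fixed_coord ?delta_fixed.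
apply: (brace_iso_inv _ _ gD).
- apply: (additive_inj gD) => p gp0; apply/eqP.
  have := g_fixed p; rewrite gp0 fixed0 //.
  move: gp0; rewrite /g; case: p => [[[|[|?]] ?] [[|[|?]] ?]] //=.
  by rewrite mulr1n mulr0n addr0 => /eqP; rewrite (negbTE delta_x_neq0).
- move=> t; case: (elementsA t) => ->.
  + by exists (0, 0); rewrite /g /= !mulr0n addr0.
  + by exists (1, 0); rewrite /g /= mulr1n mulr0n addr0.
  + by exists (0, 1); rewrite /g /= mulr1n mulr0n add0r.
  + by exists (1, 1); rewrite /g /= !mulr1n addrC.
- move=> p q; have -> : circ2 p q = p + q + (p.2 * q.2, 0).
    by rewrite -[RHS]/(p.1 + q.1 + p.2 * q.2, p.2 + q.2 + 0) addr0.
  rewrite !gD circ_delta g_fixed deltaA g_fixed; congr (_ + _).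
  by case: p q => [p1 [[|[|?]] ?]] [q1 [[|[|?]] ?]]; rewrite /g /= ?mulr0n ?mulr1n ?addr0.
Qed.

Lemma iso_Z4 : x + x = delta x -> exists f : T -> 'Z_4, brace_iso circ circ1 f.
Proof.
move=> xx_delta; pose g (p : 'Z_4) := x *+ val p.
have x4 : x *+ 4 = 0.
  by rewrite (_ : 4 = 2 + 2)%N // mulrnDr mulr2n xx_delta fixed_double ?delta_fixed.
have gD : {morph g : p q / p + q} by move=> p q; rewrite /g natmul_ZpD.
have g_fixed p : fixed (g p) = ~~ odd (val p) by rewrite fixed_moved_Mn.
apply: (brace_iso_inv _ _ gD).
- apply: (additive_inj gD) => p gp0; apply/eqP.
  have := g_fixed p; rewrite gp0 fixed0 //.
  move: gp0; rewrite /g; case: p => [[|[|[|[|?]]]] ?] //=.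
  by rewrite mulr2n xx_delta => /eqP; rewrite (negbTE delta_x_neq0).
- move=> t; case: (elementsA t) => ->.
  + by exists 0; rewrite /g /= mulr0n.
  + by exists 2; rewrite /g /= mulr2n.
  + by exists 1; rewrite /g /= mulr1n.
  + by exists 3; rewrite /g /= -xx_delta mulrS mulr2n.
- move=> p q; have -> : circ1 p q = p + q + 2 * p * q by [].
  rewrite !gD circ_delta g_fixed deltaA g_fixed; congr (_ + _).
  by case: p q => [[|[|[|[|?]]]] ?] [[|[|[|[|?]]]] ?]; rewrite /g /= ?mulr0n ?mulr2n.
Qed.

(* Since x + x is fixed, one of the two cases above occurs. *)
Lemma classification_delta_trivial :
  (exists f : T -> 'Z_4, brace_iso circ circ1 f) \/
  (exists f : T -> 'Z_2 * 'Z_2, brace_iso circ circ2 f).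
Proof.
by case: (fixedA fixed_xx) => [/iso_Z2Z2|/iso_Z4]; [right|left].
Qed.

End DeltaTrivialOnFix.

Section DeltaNontrivialOnFix.
(* Second case, with the base point normalised as in good_base_point:
   delta x = x + x and k := delta (x + x) is nonzero; then T has order 8. *)
Hypothesis delta_x : delta x = x + x.
Hypothesis k_neq0 : delta (x + x) != 0.
Local Notation k := (delta (x + x)).

Lemma fixed_k : fixed k.
Proof. exact: delta_fixed. Qed.

Lemma delta_k : delta k = 0.
Proof. by rewrite delta_delta ?fixed_xx. Qed.

Lemma delta_xn (j : 'Z_4) : delta (x *+ val j) = [:: 0; x + x; k; k + (x + x)]`_(val j).
Proof.
case: j => [[|[|[|[|?]]]] ?] //=; rewrite ?mulr0n ?delta0 ?mulr1n ?mulr2n //.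
by rewrite mulrS mulr2n (deltaD x fixed_xx) delta_x addrC.
Qed.

Lemma elementsB f : fixed f -> [\/ f = 0, f = k, f = x + x | f = k + (x + x)].
Proof.
move=> /delta_surj [a <-]; have [fix_a|a_moved] := boolP (fixed a).
  case: (delta_fixed_values fix_a) => ->; first by constructor 1.
  by constructor 2; rewrite delta_double.
rewrite delta_moved // delta_x.
case: (delta_fixed_values (moved_subx a_moved)) => ->.
  by constructor 3; rewrite addr0.
by constructor 4; rewrite -delta_double addrC.
Qed.

Definition coord24 (p : 'Z_2 * 'Z_4) : T := k *+ val p.1 + x *+ val p.2.

Lemma coord24D : {morph coord24 : p q / p + q}.
Proof.
have k2 : k *+ 2 = 0 by rewrite mulr2n (fixed_double fixed_k).
have x4 : x *+ 4 = 0.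
  by rewrite (_ : 4 = 2 + 2)%N // mulrnDr mulr2n (fixed_double fixed_xx).
by move=> p q; rewrite /coord24 !natmul_ZpD // addrACA.
Qed.

Lemma coord24_fixed p : fixed (coord24 p) = ~~ odd (val p.2).
Proof. by rewrite fixed_coord ?fixed_k. Qed.

Lemma coord24_delta p : delta (coord24 p) = delta (x *+ val p.2).
Proof.
have fix_kn := fixedMn brace (val p.1) fixed_k.
by rewrite /coord24 addrC (deltaD _ fix_kn) (deltaMn _ fixed_k) delta_k mul0rn addr0.
Qed.

Lemma iso_Z2Z4 : exists f : T -> 'Z_2 * 'Z_4, brace_iso circ circ3 f.
Proof.
apply: (brace_iso_inv _ _ coord24D).
- apply: (additive_inj coord24D) => p gp0; apply/eqP.
  have := coord24_fixed p; have := coord24_delta p.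
  rewrite gp0 fixed0 // delta0 delta_xn.
  move: gp0; rewrite /coord24; case: p => [[[|[|?]] ?] [[|[|[|[|?]]]] ?]] //=.
  + by move=> _ /esym/eqP; rewrite (negbTE k_neq0).
  + by rewrite mulr1n mulr0n addr0 => /eqP; rewrite (negbTE k_neq0).
  + by move=> _ /esym/eqP; rewrite (negbTE k_neq0).
- have fixed_im f : fixed f -> exists p, coord24 p = f.
    move=> /elementsB [] ->; rewrite /coord24.
    + by exists (0, 0); rewrite /= !mulr0n addr0.
    + by exists (1, 0); rewrite /= mulr1n mulr0n addr0.
    + by exists (0, 2); rewrite /= mulr0n add0r mulr2n.
    + by exists (1, 2); rewrite /= mulr1n mulr2n.
  move=> t; have [/fixed_im//|t_moved] := boolP (fixed t).
  have [p gp] := fixed_im _ (moved_subx t_moved).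
  by exists (p + (0, 1)); rewrite coord24D gp /coord24 /= mulr0n mulr1n add0r subrK.
- move=> p q; have -> : circ3 p q = p + q + (eps_mul p.2 q.2, 2 * p.2 * q.2) by [].
  rewrite !coord24D circ_delta coord24_fixed coord24_delta delta_xn; congr (_ + _).
  case: p q => [p1 [[|[|[|[|?]]]] ?]] [q1 [[|[|[|[|?]]]] ?]] //=;
    rewrite /coord24 /= ?mulr0n ?mulr1n ?add0r ?addr0 //.
Qed.

End DeltaNontrivialOnFix.

End SingleOrbit.

Lemma single_orbit_classification (T : finZmodType) (circ : T -> T -> T) (x : T) :
  is_skew_brace circ -> ~~ lam_fixed circ x ->
  (forall c, ~~ lam_fixed circ c -> c \in lam_orbit circ x) ->
  (exists f : T -> 'Z_4, brace_iso circ circ1 f) \/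
  (exists f : T -> 'Z_2 * 'Z_2, brace_iso circ circ2 f) \/
  (exists f : T -> 'Z_2 * 'Z_4, brace_iso circ circ3 f).
Proof.
move=> brace x_moved one_orbit.
have [delta2_0|delta2_neq0] := eqVneq (delta circ x (delta circ x x)) 0.
  have [iso|iso] := classification_delta_trivial brace x_moved one_orbit delta2_0.
    by left.
  by right; left.
(* Otherwise move the base point to some z with delta z = z + z; the defect
   map does not change. *)
right; right.
have [z z_moved delta_z] := good_base_point brace x_moved one_orbit delta2_neq0.
have rebase a : delta circ z a = delta circ x a.
  by rewrite {1}/delta (delta_rebase brace x_moved one_orbit a z_moved).
apply: (iso_Z2Z4 brace z_moved (one_orbit_moved brace one_orbit z_moved)).
  by rewrite !rebase.
by rewrite rebase (moved_double brace x_moved one_orbit z_moved) delta_double.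
Qed.

(* A single vertex of Theta(A) means a single nontrivial lambda-orbit. *)
Theorem mainTheorem20 (T : finZmodType) (circ : T -> T -> T) :
  is_skew_brace circ ->
  #|Theta_vertices circ| = 1%N ->
  (exists f : T -> 'Z_4, brace_iso circ circ1 f) \/
  (exists f : T -> 'Z_2 * 'Z_2, brace_iso circ circ2 f) \/
  (exists f : T -> 'Z_2 * 'Z_4, brace_iso circ circ3 f).
Proof.
move=> brace /eqP/cards1P [V V_only].
have /imsetP [x] : V \in Theta_vertices circ by rewrite V_only set11.
rewrite inE theta_orbitE // card_orbit_gt1 // => x_moved V_x.
apply: (single_orbit_classification brace x_moved) => c c_moved.
have : theta_orbit circ c \in Theta_vertices circ.
  by apply/imsetP; exists c; rewrite // inE theta_orbitE // card_orbit_gt1.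
rewrite V_only inE V_x !theta_orbitE // => /eqP <-.
exact: orbit_self.
Qed.
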